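(* Let $n \geqslant 1$, let $\lambda$ be an integer partition with $\lambda_1+\ell(\lambda)-1=n$, and let $c \in \mathfrak{S}_{n+1}$ be a Coxeter element. Fix $k \in \{1,\ldots,n\}$ such that $s_k$ is final in $\mathsf{c}(\lambda)$, and $s_k$ is either initial or final in $c$. Then for every $a\in\mathbb{N}$ and every filling $f$ of $\lambda$, \[\mathcal{RSK}_{\lambda,c}(\mathrm{add}^a_{\lambda,k}(f)) = \mathrm{add}^a_{\lambda,k}(\mathcal{RSK}_{\lambda,c}(f)).\]
   Context: $s_i=(i,i+1)\in\mathfrak{S}_{n+1}$; $\ell(w)$ is the Coxeter length w.r.t. $\{s_1,\dots,s_n\}$. A Coxeter element is a product of $s_1,\dots,s_n$ each exactly once. $s$ is initial in $w$ if $\ell(sw)<\ell(w)$ and final in $w$ if $\ell(ws)<\ell(w)$. Ferrers diagram $\mathrm{Fer}(\lambda)=\{(i,j):j\le\lambda_i\}$. Row/column labels: label the unit segments of the south-east boundary of $\mathrm{Fer}(\lambda)$ by $1,\dots,n+1$ from top-right to bottom-left; rows and columns inherit labels; $\mathbf L$ = row labels, $\mathbf R$ = column labels; $[\ell,r]$ is the box with row label $\ell$ and column label $r$ (exists iff $\ell<r$). Every Coxeter element is a long cycle $(c_1=1<c_2<\dots<c_m=n+1>c_{m+1}>\dots>c_{n+1})$; $\mathsf{c}(\lambda)$ is the unique Coxeter element for which $\{c_2,\dots,c_{m-1}\}=\mathbf L\setminus\{1\}$ and $\{c_{m+1},\dots,c_{n+1}\}=\mathbf R\setminus\{n+1\}$.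 For $a\in\mathbb{N}$ and a filling $g$ of $\lambda$, $\mathrm{add}^a_{\lambda,k}(g)$ is the filling obtained from $g$ by adding $a$ to the value of the box $[k,k+1]$ only (under the hypothesis, $k\in\mathbf L$ and $k+1\in\mathbf R$). Diagonals $D_k(\lambda)=\{(i,j):\lambda_1+i-j=k\}$, $\delta_k=\max\{\min(i,j):(i,j)\in D_k(\lambda)\}$, $(i,j)\in D_k(\lambda)$ has coordinates $\langle k,\delta\rangle_\lambda$ with $\delta=\delta_k-\min(i,j)+1$. Greene–Kleitman: for acyclic $G$ and $g:G_0\to\mathbb{N}$, $M_t$ = max over $t$-tuples of (possibly one-vertex) directed paths of the sum of $g$ over the union of their vertices, $M_0=0$, $\mathrm{GK}_G(g)=(M_t-M_{t-1})_{t\ge1}$. $\mathrm{AR}(c)$ has vertices the transpositions $(i,j)$, $1\le i<j\le n+1$, arrows $(i,j)\to(i,c(j))$ if $i<c(j)$ and $(i,j)\to(c(i),j)$ if $c(i)<j$; $\mathrm{AR}^{[k]}(c)$ is the full subgraph on $(\ell,r)$, $\ell\le k<r$. $\mathrm{rep}_{\lambda,c}(f)(\ell,r)=f([\ell,r])$ if $\ell\in\mathbf L,r\in\mathbf R,\ell<r$, else $0$; $\mathcal{RSK}_{\lambda,c}(f)(\langle k,\delta\rangle_\lambda)$ is the $\delta$-th part of $\mathrm{GK}_{\mathrm{AR}^{[k]}(c)}$ of the restriction of $\mathrm{rep}_{\lambda,c}(f)$. *)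

From HB Require Import structures.
From mathcomp Require Import all_boot all_order all_fingroup.
Set Implicit Arguments. Unset Strict Implicit. Unset Printing Implicit Defensive.

Definition is_partition (la : seq nat) := sorted geq la && all (fun x => 0 < x) la.
Definition lam1 (la : seq nat) := head 0 la.
Definition part (la : seq nat) (i : nat) := nth 0 la i.-1.
Definition conjp (la : seq nat) (j : nat) := count (fun x => j <= x) la.
Definition in_Fer (la : seq nat) (i j : nat) :=
  (1 <= i <= size la) && (1 <= j <= part la i).

(* Labels of the south-east boundary, numbered 1..n+1 from top-right to
   bottom-left.  Row i ends with the vertical segment preceded by i-1 vertical
   and lambda_1 - lambda_i horizontal segments; column j is the horizontal
   segment preceded by lambda'_j vertical and lambda_1 - j horizontal ones. *)
Definition rowlab (la : seq nat) (i : nat) := i + lam1 la - part la i.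
Definition collab (la : seq nat) (j : nat) := conjp la j + (lam1 la - j) + 1.
Definition Llabels (la : seq nat) := [seq rowlab la i | i <- iota 1 (size la)].
Definition Rlabels (la : seq nat) := [seq collab la j | j <- iota 1 (lam1 la)].
Definition rowof (la : seq nat) (l : nat) := (index l (Llabels la)).+1.
Definition colof (la : seq nat) (r : nat) := (index r (Rlabels la)).+1.

(* fillings are functions on coordinates (only values on boxes matter) *)
Definition rep (la : seq nat) (f : nat -> nat -> nat) (l r : nat) : nat :=
  if [&& l \in Llabels la, r \in Rlabels la & l < r]
  then f (rowof la l) (colof la r) else 0.

Definition addk (la : seq nat) (k a : nat) (g : nat -> nat -> nat) (i j : nat) : nat :=
  if (i == rowof la k) && (j == colof la k.+1) then g i j + a else g i j.

(* ---------- Symmetric group S_{n+1}: labels 1..n+1 <-> ordinals 0..n ---------- *)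
(* mathcomp convention: (s * t) x = t (s x). *)
Definition sadj (n i : nat) : 'S_n.+1 := tperm (inord i.-1) (inord i).
Definition word_prod (n : nat) (w : seq nat) : 'S_n.+1 := (\prod_(i <- w) sadj n i)%g.
Definition coxeter_element (n : nat) (c : 'S_n.+1) :=
  exists w : seq nat, perm_eq w (iota 1 n) /\ c = word_prod n w.
Definition has_word (n : nat) (p : 'S_n.+1) (m : nat) :=
  exists w : seq nat, [/\ size w = m, all (fun i => 0 < i <= n) w & p = word_prod n w].
Definition is_coxlen (n : nat) (p : 'S_n.+1) (m : nat) :=
  has_word p m /\ forall m', has_word p m' -> m <= m'.
(* s initial in w : l(s o w) < l(w);  s o w (function composition) = w * s *)
Definition initial (n : nat) (s w : 'S_n.+1) :=
  exists m m', [/\ is_coxlen (w * s)%g m', is_coxlen w m & m' < m].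
(* s final in w : l(w o s) < l(w);  w o s = s * w *)
Definition final (n : nat) (s w : 'S_n.+1) :=
  exists m m', [/\ is_coxlen (s * w)%g m', is_coxlen w m & m' < m].
Definition pfun (n : nat) (c : 'S_n.+1) (x : nat) : nat := (c (inord x.-1)).+1.

(* c(lambda): the long cycle (1 < ... < n+1 > ...) with increasing part the
   row labels and decreasing part the column labels *)
Definition cycle_seq (la : seq nat) :=
  sort leq (Llabels la) ++ rev (sort leq (Rlabels la)).
Definition cycle_ord (n : nat) (la : seq nat) : seq 'I_n.+1 :=
  [seq inord x.-1 | x <- cycle_seq la].
Definition clam (n : nat) (la : seq nat) : 'S_n.+1 :=
  match @idP (uniq (cycle_ord n la)) with
  | ReflectT h => perm (can_inj (prev_next h))
  | ReflectF _ => 1%g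
  end.

Definition is_path_set (T : finType) (Vp : pred T) (E : rel T) (S : {set T}) : bool :=
  [exists m : 'I_#|T|.+1, exists s : m.-tuple T,
     [&& 0 < m, uniq s, all Vp s, sorted E s & S == [set x in s]]].
Definition GK_M (T : finType) (Vp : pred T) (E : rel T) (g : T -> nat) (t : nat) : nat :=
  \max_(F : {ffun 'I_t -> {set T}} | [forall i, is_path_set Vp E (F i)])
     \sum_(v in \bigcup_(i < t) F i) g v.
Definition GK_part (T : finType) (Vp : pred T) (E : rel T) (g : T -> nat) (d : nat) : nat :=
  GK_M Vp E g d - GK_M Vp E g d.-1.

(* vertices: pairs of labels (l,r), stored as ordinals < n+2 *)
Definition vtx (n : nat) := ('I_n.+2 * 'I_n.+2)%type.
Definition ARk_vert (n k : nat) (v : vtx n) : bool :=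
  [&& 1 <= v.1, v.1 <= k, k < v.2 & v.2 <= n.+1].
Definition AR_arrow (n : nat) (c : 'S_n.+1) (u v : vtx n) : bool :=
  [&& (v.1 : nat) == u.1, (v.2 : nat) == pfun c u.2 & u.1 < pfun c u.2]
  || [&& (v.2 : nat) == u.2, (v.1 : nat) == pfun c u.1 & pfun c u.1 < u.2].
Definition ARk_edge (n : nat) (c : 'S_n.+1) (k : nat) (u v : vtx n) : bool :=
  [&& ARk_vert k u, ARk_vert k v & AR_arrow c u v].

Definition boxes (la : seq nat) :=
  [seq (i, j) | i <- iota 1 (size la), j <- iota 1 (part la i)].
Definition diag (la : seq nat) (i j : nat) := lam1 la + i - j.
Definition delta_max (la : seq nat) (k : nat) :=
  \max_(p <- boxes la | diag la p.1 p.2 == k) minn p.1 p.2.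
Definition RSK (n : nat) (la : seq nat) (c : 'S_n.+1) (f : nat -> nat -> nat)
    (i j : nat) : nat :=
  let k := diag la i j in
  let d := delta_max la k - minn i j + 1 in
  GK_part (@ARk_vert n k) (ARk_edge c k) (fun v : vtx n => rep la f v.1 v.2) d.

(* When s_k is final in c, the vertex (k, k+1) of AR^[k](c) is a sink and every
   other vertex has an outgoing arrow: in a Coxeter element each cut between
   {1..j} and {j+1..n+1} is crossed by exactly one letter, which pins down how c
   moves the labels around k.  As AR^[k](c) is acyclic, every path extends to
   one through (k, k+1).  When s_k is initial in c, the same holds for c^-1,
   whose graph AR^[k] is the converse one.  Hence adding a at (k, k+1) raises
   every Greene-Kleitman number M_t, t >= 1, by exactly a, i.e. only the first
   part of the shape on the diagonal D_k changes, and on D_k the box [k, k+1]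
   is the one of largest min(i, j), so it carries that first part.  The other
   diagonals see no change at all. *)

From HB Require Import structures.
From mathcomp Require Import all_boot all_order all_fingroup.
From mathcomp Require Import zify.
Set Implicit Arguments. Unset Strict Implicit. Unset Printing Implicit Defensive.

Section PrefixStable.
Variable n : nat.
Local Open Scope group_scope.
Implicit Types (p q : 'S_n.+1) (x : 'I_n.+1) (i j : nat).

Definition prefix_stable p j := [forall x : 'I_n.+1, (x < j) ==> (p x < j)].

Lemma prefix_stableP p j :
  reflect (forall x : 'I_n.+1, x < j -> p x < j) (prefix_stable p j).
Proof. by apply: (iffP forallP) => H x; [apply/implyP | apply/implyP/H]. Qed.

Lemma prefix_stable1 j : prefix_stable 1 j.
Proof. by apply/prefix_stableP => x; rewrite perm1. Qed.

Lemma prefix_stableM p q j :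
  prefix_stable p j -> prefix_stable q j -> prefix_stable (p * q) j.
Proof.
move=> /prefix_stableP hp /prefix_stableP hq.
by apply/prefix_stableP => x hx; rewrite permM; apply/hq/hp.
Qed.

Lemma prefix_stableX p j t : prefix_stable p j -> prefix_stable (p ^+ t) j.
Proof.
by move=> hp; elim: t => [|t IH]; rewrite ?expg0 ?prefix_stable1 // expgS prefix_stableM.
Qed.

(* A permutation mapping the finite prefix [0, j) into itself maps it onto itself. *)
Lemma prefix_stableV p j : prefix_stable p j -> prefix_stable p^-1 j.
Proof.
move=> /prefix_stableP hp; apply/prefix_stableP => y hy.
pose A := [set x : 'I_n.+1 | x < j].
have pA : p @: A = A.
  apply/eqP; rewrite eqEcard (card_imset _ (@perm_inj _ p)) leqnn andbT.
  by apply/subsetP => z /imsetP [x]; rewrite inE => /hp hx ->; rewrite inE.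
have : y \in p @: A by rewrite pA inE.
by case/imsetP => x; rewrite inE => hx ->; rewrite permK.
Qed.

Lemma prefix_stable_ge p j x : prefix_stable p j -> j <= x -> j <= p x.
Proof.
move=> /prefix_stableV /prefix_stableP hp hx; rewrite leqNgt; apply/negP => /hp.
by rewrite permK ltnNge hx.
Qed.

Lemma sadjE i x : 1 <= i <= n ->
  sadj n i x = (if x == i.-1 :> nat then i else if x == i :> nat then i.-1 else x) :> nat.
Proof.
move=> hi; rewrite /sadj.
case: tpermP => [->|->|/eqP hx /eqP hy]; rewrite ?inordK; try lia.
- by rewrite eqxx.
- by rewrite ifF ?eqxx //; apply/eqP; lia.
- rewrite -(inj_eq val_inj) /= inordK in hx; last lia.
  rewrite -(inj_eq val_inj) /= inordK in hy; last lia.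
  by rewrite (negbTE hx) (negbTE hy).
Qed.

Lemma sadj_id i x : 1 <= i <= n -> x != i.-1 :> nat -> x != i :> nat -> sadj n i x = x.
Proof. by move=> hi x1 x2; apply: val_inj; rewrite /= sadjE // (negbTE x1) (negbTE x2). Qed.

Lemma sadjV i : (sadj n i)^-1 = sadj n i.
Proof. exact: tpermV. Qed.

Lemma sadjK i : sadj n i * sadj n i = 1.
Proof. by rewrite -{1}sadjV mulVg. Qed.

Lemma prefix_stable_sadj i j : 1 <= i <= n -> i != j -> prefix_stable (sadj n i) j.
Proof.
move=> hi hij; apply/prefix_stableP => x hx; rewrite sadjE //.
by case: ifP => [/eqP|_]; [|case: ifP => [/eqP|_]]; lia.
Qed.

Lemma prefix_stable_word w j :
  all (fun i => (0 < i <= n) && (i != j)) w -> prefix_stable (word_prod n w) j.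
Proof.
elim: w => [|i w IH] /=; first by rewrite /word_prod big_nil prefix_stable1.
case/andP => /andP [hi hij] hw.
by rewrite /word_prod big_cons prefix_stableM ?prefix_stable_sadj ?IH.
Qed.

End PrefixStable.

Section Coxeter.
Variable n : nat.
Local Open Scope group_scope.
Implicit Types (c p q : 'S_n.+1) (x y : 'I_n.+1) (i j : nat) (w : seq nat).

Lemma word_prodV w : (word_prod n w)^-1 = word_prod n (rev w).
Proof.
elim: w => [|i w IH]; first by rewrite /word_prod big_nil invg1.
by rewrite /word_prod rev_cons big_rcons big_cons invMg -/(word_prod n w) IH sadjV.
Qed.

Lemma coxeter_elementV c : coxeter_element c -> coxeter_element c^-1.
Proof.
by case=> w [hw ->]; exists (rev w); rewrite word_prodV perm_rev.
Qed.

Lemma coxeter_word c : coxeter_element c ->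
  exists w, [/\ uniq w, all (fun i => 0 < i <= n) w, size w = n, c = word_prod n w
     & forall j, 0 < j <= n -> j \in w].
Proof.
case=> w [hw ->]; have mem_w j : (j \in w) = (0 < j <= n).
  by rewrite (perm_mem hw) mem_iota; lia.
exists w; split => //; first by rewrite (perm_uniq hw) iota_uniq.
- by apply/allP => i; rewrite mem_w.
- by rewrite (perm_size hw) size_iota.
- by move=> j; rewrite mem_w.
Qed.

Lemma coxeter_split c j : coxeter_element c -> 1 <= j <= n ->
  exists p q, [/\ prefix_stable p j, prefix_stable q j & c = p * sadj n j * q].
Proof.
move=> /coxeter_word [w [uw rw _ -> w_all]] hj.
case/splitPr: (w_all j hj) uw rw => w1 w2; rewrite cat_uniq /= => /and4P [_ nw12 nw2 _].
rewrite all_cat /= => /and3P [rw1 _ rw2].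
exists (word_prod n w1), (word_prod n w2); split.
- apply/prefix_stable_word/allP => i hi; rewrite (allP rw1) //=.
  by apply: contraNneq nw12 => <-; rewrite hi.
- apply/prefix_stable_word/allP => i hi; rewrite (allP rw2) //=.
  by apply: contraNneq nw2 => <-.
- by rewrite /word_prod big_cat big_cons /= mulgA.
Qed.

Lemma coxeter_not_prefix_stable c j : coxeter_element c -> 1 <= j <= n ->
  ~~ prefix_stable c j.
Proof.
move=> hc hj; case: (coxeter_split hc hj) => p [q [hp hq ->]].
apply/prefix_stableP => /(_ (p^-1 (inord j.-1))).
have /prefix_stableP -> := prefix_stableV hp; rewrite ?inordK; try lia.
rewrite !permM permKV => /(_ isT); apply/negP; rewrite -leqNgt.
by apply: prefix_stable_ge hq _; rewrite sadjE // inordK ?eqxx //; lia.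
Qed.

(* In a Coxeter element, s_j is the only letter moving elements across the cut at j. *)
Lemma coxeter_descent_uniq c j y1 y2 : coxeter_element c -> 1 <= j <= n ->
  j <= y1 -> j <= y2 -> c y1 < j -> c y2 < j -> y1 = y2.
Proof.
move=> hc hj; case: (coxeter_split hc hj) => p [q [hp hq ->]].
have crossing y : j <= y -> (p * sadj n j * q)%g y < j -> p y = j :> nat.
  move=> hy; rewrite !permM; have := prefix_stable_ge hp hy.
  move=> hpy; apply: contraTeq => hne; rewrite -leqNgt; apply: prefix_stable_ge hq _.
  by rewrite sadjE //; case: ifP => [/eqP|_]; [lia | rewrite (negbTE hne)].
move=> hy1 hy2 c1 c2; apply: (@perm_inj _ p); apply: val_inj.
by rewrite /= (crossing _ hy1 c1) (crossing _ hy2 c2).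
Qed.

Lemma card_porbits_word w : uniq w -> all (fun i => 0 < i <= n) w ->
  #|porbits (word_prod n w)| + size w = n.+1.
Proof.
elim: w => [_ _|i w IH /= /andP [iw uw] /andP [hi rw]].
  rewrite /word_prod big_nil addn0 /porbits card_imset ?card_ord // => x y.
  by move/eqP; rewrite eq_porbit_mem porbit.unlock cycle1 imset_set1 /aperm perm1 inE => /eqP.
have stable_i : prefix_stable (word_prod n w) i.
  apply/prefix_stable_word/allP => l hl; rewrite (allP rw l hl) /=.
  by apply: contraNneq iw => <-.
have split_orbit : (inord i.-1 : 'I_n.+1) \notin porbit (word_prod n w) (inord i).
  apply/porbitP => -[t et].
  have : i <= (word_prod n w ^+ t) (inord i).
    by apply: prefix_stable_ge; rewrite ?prefix_stableX // inordK; lia.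
  by rewrite -et inordK; lia.
have ne : (inord i.-1 : 'I_n.+1) != inord i.
  by rewrite -(inj_eq val_inj) /= !inordK; lia.
have := porbits_mul_tperm (word_prod n w) (inord i.-1) (inord i).
rewrite split_orbit ne /= -/(sadj n i) -addnn /word_prod big_cons -/(word_prod n w).
by have := IH uw rw; rewrite /=; lia.
Qed.

Lemma coxeter_orbit c : coxeter_element c -> forall x y, exists t, y = (c ^+ t) x.
Proof.
move=> /coxeter_word [w [uw rw sw -> _]] x y.
have /cards1P [O hO] : #|porbits (word_prod n w)| == 1%N.
  by have := card_porbits_word uw rw; rewrite sw; lia.
have orbit_in z : porbit (word_prod n w) z \in [set O] by rewrite -hO imset_f.
apply/porbitP; move: (orbit_in x) (orbit_in y); rewrite !inE => /eqP -> /eqP <-.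
exact: porbit_id.
Qed.

Definition unstable_cuts p := [set j : 'I_n.+1 | (0 < j) && ~~ prefix_stable p j].

Lemma card_unstable_cuts_word p m : has_word p m -> #|unstable_cuts p| <= m.
Proof.
case=> w [<- + ->]; elim: w => [|i w IH] /=.
  move=> _; rewrite /word_prod big_nil leqn0 cards_eq0; apply/eqP/setP => j.
  by rewrite !inE prefix_stable1 andbF.
case/andP => hi /IH hw; rewrite /word_prod big_cons -/(word_prod n w).
apply: leq_trans (_ : #|inord i |: unstable_cuts (word_prod n w)| <= _); last first.
  by rewrite cardsU1 -[(size w).+1]add1n leq_add ?leq_b1.
apply/subset_leq_card/subsetP => j; rewrite !inE => /andP [j0 hj].
case: (eqVneq (j : nat) i) => [ji | /eqP nji].
  by rewrite -(inj_eq val_inj) /= inordK ?ji ?eqxx //; lia.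
apply/orP; right; rewrite j0 /=; apply: contra hj => hwj.
by rewrite prefix_stableM // prefix_stable_sadj //; apply/eqP; lia.
Qed.

Lemma card_unstable_cuts_full p :
  (forall j, 1 <= j <= n -> ~~ prefix_stable p j) -> #|unstable_cuts p| = n.
Proof.
move=> h; have -> : unstable_cuts p = [set~ ord0].
  apply/setP => j; rewrite !inE -(inj_eq val_inj) /= -lt0n.
  by case: (posnP j) => [->|hj] //=; rewrite h //; have := ltn_ord j; lia.
by rewrite cardsC1 card_ord.
Qed.

(* c crosses every cut, hence so does q at every cut j <> k; crossing k as well
   would cost q at least n letters, while it is shorter than c. *)
Lemma shorter_prefix_stable c q k m m' : coxeter_element c -> 1 <= k <= n ->
  (forall j, j != k -> prefix_stable q j -> prefix_stable c j) ->
  is_coxlen q m' -> is_coxlen c m -> m' < m -> prefix_stable q k.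
Proof.
move=> hc hk hq [hw' _] [_ hmin] hlt.
have hm : m <= n.
  by case: (coxeter_word hc) => w [_ rw sw cw _]; apply: hmin; exists w.
move: (card_unstable_cuts_word hw'); apply: contraTT => hnp; rewrite -ltnNge.
rewrite card_unstable_cuts_full; first lia.
move=> j hj; have [->//|njk] := eqVneq j k.
exact: contra (hq j njk) (coxeter_not_prefix_stable hc hj).
Qed.

Lemma initial_prefix_stable c k : coxeter_element c -> 1 <= k <= n ->
  initial (sadj n k) c -> prefix_stable (c * sadj n k) k.
Proof.
move=> hc hk [m [m' [h1 h2 h3]]]; apply: (shorter_prefix_stable hc hk _ h1 h2 h3).
move=> j njk hp; rewrite -(mulg1 c) -(sadjK n k) mulgA.
by apply: prefix_stableM => //; apply: prefix_stable_sadj; rewrite 1?eq_sym.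
Qed.

Lemma final_prefix_stable c k : coxeter_element c -> 1 <= k <= n ->
  final (sadj n k) c -> prefix_stable (sadj n k * c) k.
Proof.
move=> hc hk [m [m' [h1 h2 h3]]]; apply: (shorter_prefix_stable hc hk _ h1 h2 h3).
move=> j njk hp; rewrite -(mul1g c) -(sadjK n k) -mulgA.
by apply: prefix_stableM => //; apply: prefix_stable_sadj; rewrite 1?eq_sym.
Qed.

End Coxeter.

Section PathSets.
Variables (T : finType) (Vp : pred T).
Implicit Types (E : rel T) (S : {set T}).

Lemma is_path_setP E S :
  reflect (exists s : seq T, [/\ 0 < size s, uniq s, all Vp s, sorted E s & S = [set x in s]])
          (is_path_set Vp E S).
Proof.
apply: (iffP existsP) => [[m /existsP [s /and5P [s0 us Vs Es /eqP ->]]]|[s [s0 us Vs Es ->]]].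
  by exists s; rewrite size_tuple.
have hs : size s < #|T|.+1 by rewrite ltnS -(card_uniqP us) max_card.
exists (Ordinal hs); apply/existsP; exists (in_tuple s).
by rewrite /= s0 us Vs Es eqxx.
Qed.

Lemma path_set_vert E S u : is_path_set Vp E S -> u \in S -> Vp u.
Proof. by case/is_path_setP => s [_ _ /allP Vs _ ->]; rewrite inE => /Vs. Qed.

Lemma is_path_set_converse E E' S : (forall x y, E' x y = E y x) ->
  is_path_set Vp E' S -> is_path_set Vp E S.
Proof.
move=> EE' /is_path_setP [s [s0 us Vs Es ->]]; apply/is_path_setP; exists (rev s).
rewrite size_rev rev_uniq all_rev rev_sorted; split => //.
- by apply: sub_sorted Es => x y; rewrite EE'.
- by apply/setP => x; rewrite !inE mem_rev.
Qed.

Definition extends_through E v := forall S, is_path_set Vp E S ->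
  exists S', [/\ is_path_set Vp E S', S \subset S' & v \in S'].

Lemma extends_through_converse E E' v : (forall x y, E' x y = E y x) ->
  extends_through E' v -> extends_through E v.
Proof.
move=> EE' ext S /(is_path_set_converse (E' := E) (fun x y => esym (EE' y x))) /ext.
by case=> S' [PS' sub vS']; exists S'; split => //; apply: is_path_set_converse PS'.
Qed.

Section Sink.
Variables (E : rel T) (v : T) (phi : T -> nat).
Hypotheses (E_vert : forall x y, E x y -> Vp x && Vp y)
           (phi_decr : forall x y, E x y -> phi y < phi x)
           (out_edge : forall u, Vp u -> u != v -> exists w, E u w).

Lemma path_to_sink u : Vp u -> exists p, path E u p /\ last u p = v.
Proof.
elim: {u} (phi u) {-2}u (leqnn (phi u)) => [|m IH] u hu Vu;
  (have [->|nuv] := eqVneq u v; first by exists [::]);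
  case: (out_edge Vu nuv) => w uw; have := phi_decr uw; first lia.
move=> hw; case: (IH w) => [||p [wp <-]]; first lia.
  by case/andP: (E_vert uw).
by exists (w :: p); rewrite /= uw wp.
Qed.

Lemma path_vert x p : path E x p -> all Vp p.
Proof.
elim: p x => [|y p IH] x //= /andP [xy yp].
by case/andP: (E_vert xy) => _ ->; exact: IH yp.
Qed.

Lemma path_uniq x p : path E x p -> uniq (x :: p).
Proof.
move=> xp; apply: (@sorted_uniq _ (fun a b => phi b < phi a)).
- by move=> a b c ba cb; apply: ltn_trans ba.
- by move=> a; rewrite ltnn.
- by apply: sub_path xp => a b /phi_decr.
Qed.

(* Append to any path a path from its end to the sink v. *)
Lemma extends_through_sink : extends_through E v.
Proof.
move=> _ /is_path_setP [[|x s] [// _ _ Vs Es ->]].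
have [p [sp <-]] := path_to_sink (allP Vs _ (mem_last x s)).
have xsp : path E x (s ++ p) by rewrite cat_path sp andbT.
exists [set y in x :: s ++ p]; split.
- apply/is_path_setP; exists (x :: s ++ p); split => //; first exact: path_uniq.
  by rewrite -cat_cons all_cat Vs (path_vert sp).
- by apply/subsetP => y; rewrite !inE mem_cat => /orP [|] ->; rewrite ?orbT.
- by rewrite inE -last_cat mem_last.
Qed.

End Sink.
End PathSets.

Definition add_at (T : eqType) (v : T) (a : nat) (g : T -> nat) (u : T) : nat :=
  g u + (if u == v then a else 0).

Section GreeneKleitman.
Variables (T : finType) (Vp : pred T) (E : rel T).
Implicit Types (g : T -> nat) (t d : nat).

Lemma eq_GK_M g1 g2 t : {in Vp, g1 =1 g2} -> GK_M Vp E g1 t = GK_M Vp E g2 t.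
Proof.
move=> g12; apply: eq_bigr => F /forallP PF; apply: eq_bigr => u /bigcupP [i _ uF].
exact/g12/(path_set_vert (PF i) uF).
Qed.

Lemma eq_GK_part g1 g2 d : {in Vp, g1 =1 g2} -> GK_part Vp E g1 d = GK_part Vp E g2 d.
Proof. by move=> g12; rewrite /GK_part !(eq_GK_M _ g12). Qed.

Lemma GK_M0 g : GK_M Vp E g 0 = 0.
Proof. by apply/eqP; rewrite -leqn0; apply/bigmax_leqP => F _; rewrite big_ord0 big_set0. Qed.

Section AddAtVertex.
Variables (v : T) (a : nat).
Hypotheses (Vv : Vp v) (ext : extends_through Vp E v).

Lemma sum_add_at g (U : {set T}) :
  \sum_(u in U) add_at v a g u = \sum_(u in U) g u + (if v \in U then a else 0).
Proof.
rewrite big_split /=; congr (_ + _); case: ifP => vU.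
  by rewrite (bigD1 v) //= eqxx big1 ?addn0 // => u /andP [_ /negbTE ->].
by rewrite big1 // => u uU; case: eqP => // uv; rewrite -uv uU in vU.
Qed.

(* Since v can be threaded into one of the t paths of an optimal family without
   losing any vertex, M_t grows by exactly a. *)
Lemma GK_M_add_at g t : 0 < t -> GK_M Vp E (add_at v a g) t = GK_M Vp E g t + a.
Proof.
move=> t0; apply/eqP; rewrite eqn_leq; apply/andP; split.
  apply/bigmax_leqP => F PF; rewrite sum_add_at.
  by apply: leq_add; [apply: leq_bigmax_cond | case: ifP].
pose P (F : {ffun 'I_t -> {set T}}) := [forall i, is_path_set Vp E (F i)].
have P_ne : 0 < #|P|.
  apply/card_gt0P; exists [ffun=> [set v]]; apply/forallP => i; rewrite ffunE.
  apply/is_path_setP; exists [:: v].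
  by rewrite /= Vv; split => //; apply/setP => y; rewrite !inE.
have [F0 PF0 opt] :=
  eq_bigmax_cond (fun F : {ffun 'I_t -> {set T}} => \sum_(u in \bigcup_(i < t) F i) g u) P_ne.
rewrite /GK_M -/P opt.
pose i0 : 'I_t := Ordinal t0.
have [S' [PS' sub vS']] := ext (forallP PF0 i0).
pose F1 := [ffun i => if i == i0 then S' else F0 i].
have PF1 : P F1.
  by apply/forallP => i; rewrite ffunE; case: eqP => _; [| exact: (forallP PF0)].
apply: leq_trans (leq_bigmax_cond F1 PF1); rewrite sum_add_at.
have -> : v \in \bigcup_(i < t) F1 i by apply/bigcupP; exists i0; rewrite ?ffunE ?eqxx.
rewrite leq_add2r; apply: (sub_le_big leqnn (fun _ _ => leq_addr _ _)) => u /bigcupP [i _ uF0].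
apply/bigcupP; exists i; rewrite // ffunE; case: eqP => [ei|//].
by rewrite ei in uF0; exact: (subsetP sub).
Qed.

Lemma GK_part_add_at g d : 0 < d ->
  GK_part Vp E (add_at v a g) d = GK_part Vp E g d + (if d == 1 then a else 0).
Proof.
case: d => [//|[|d]] _; rewrite /GK_part GK_M_add_at //=.
  by rewrite !GK_M0 !subn0.
by rewrite GK_M_add_at // subnDr addn0.
Qed.

End AddAtVertex.
End GreeneKleitman.

Section Distance.
Variables (f : nat -> nat) (y : nat).
Hypothesis reach : forall x, exists t, iter t f x == y.

Definition dist x := ex_minn (reach x).

Lemma dist_min x t : iter t f x = y -> dist x <= t.
Proof. by rewrite /dist; case: ex_minnP => m _ min /eqP /min. Qed.

Lemma dist_step x : x != y -> dist (f x) < dist x.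
Proof.
move=> xy; rewrite [dist x]/dist; case: ex_minnP => [[|m] /eqP mE _].
  by rewrite -mE /= eqxx in xy.
by apply: dist_min; rewrite -iterSr.
Qed.

End Distance.

Section CycleOnLabels.
Variables (n : nat) (c : 'S_n.+1).
Local Notation sigma := (pfun c).
Local Open Scope group_scope.

Lemma pfun_ord (o : 'I_n.+1) : sigma o.+1 = (c o).+1.
Proof. by rewrite /pfun /= inord_val. Qed.

Lemma pfun_range x : 1 <= sigma x <= n.+1.
Proof. by rewrite /pfun /= ltn_ord. Qed.

Lemma pfunK x : 1 <= x <= n.+1 -> pfun c^-1 (sigma x) = x.
Proof. by move=> hx; rewrite /pfun /= inord_val permK inordK //; lia. Qed.

Lemma pfun_iter t (o : 'I_n.+1) : iter t sigma o.+1 = ((c ^+ t) o).+1.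
Proof.
elim: t => [|t IH]; first by rewrite expg0 perm1.
by rewrite iterS IH pfun_ord expgSr permM.
Qed.

Lemma pfun_reach y : coxeter_element c -> 1 <= y <= n.+1 ->
  forall x, exists t, iter t sigma x == y.
Proof.
move=> hc hy x; have [o ->] : exists o : 'I_n.+1, y = o.+1.
  by exists (inord y.-1); rewrite inordK; lia.
have [t ->] := coxeter_orbit hc (inord (sigma x).-1) o.
exists t.+1; rewrite iterSr -pfun_iter; apply/eqP; congr iter.
by have r := pfun_range x; rewrite inordK; lia.
Qed.

End CycleOnLabels.

Section ARk.
Variables (n k : nat).
Local Open Scope group_scope.
Implicit Types (u v w : vtx n).

Lemma ARk_edge_vert (c : 'S_n.+1) u v : ARk_edge c k u v -> ARk_vert k u && ARk_vert k v.
Proof. by case/and3P => -> ->. Qed.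

Lemma AR_arrowE (c : 'S_n.+1) u v : ARk_vert k u -> ARk_vert k v ->
  AR_arrow c u v = ((v.1 == u.1 :> nat) && (v.2 == pfun c u.2 :> nat))
                   || ((v.2 == u.2 :> nat) && (v.1 == pfun c u.1 :> nat)).
Proof.
rewrite /ARk_vert /AR_arrow => /and4P [u1 u2 u3 u4] /and4P [v1 v2 v3 v4].
by congr orb; [case: eqP => e1; case: eqP => e2 | case: eqP => e1; case: eqP => e2];
   rewrite /= ?andbT //; lia.
Qed.

Lemma ARk_edgeV (c : 'S_n.+1) u v : ARk_edge c^-1 k v u = ARk_edge c k u v.
Proof.
rewrite /ARk_edge andbCA; case Vu: (ARk_vert k u); case Vv: (ARk_vert k v) => //=.
rewrite !AR_arrowE //; move: Vu Vv; rewrite /ARk_vert => /and4P [u1 u2 u3 u4] /and4P [v1 v2 v3 v4].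
have pfunV_eq x y : 1 <= x <= n.+1 -> 1 <= y <= n.+1 -> (x == pfun c^-1 y) = (pfun c x == y).
  move=> hx hy; apply/eqP/eqP => [->|<-]; last by rewrite pfunK.
  by rewrite -{1}(invgK c) pfunK.
by rewrite !pfunV_eq ?(eq_sym (u.1 : nat)) ?(eq_sym (u.2 : nat)) //; lia.
Qed.

End ARk.

Section BoxVertex.
Variables (n k : nat).
Hypothesis hk : 1 <= k <= n.
Implicit Types (u : vtx n).

Definition box_vtx : vtx n := (inord k, inord k.+1).

Lemma eq_box_vtx u : (u == box_vtx) = (u.1 == k :> nat) && (u.2 == k.+1 :> nat).
Proof. by case: u => x y; rewrite xpair_eqE -!(inj_eq val_inj) /= !inordK //; lia. Qed.

Lemma box_vtx_vert : ARk_vert k box_vtx.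
Proof. by rewrite /ARk_vert /= !inordK; lia. Qed.

End BoxVertex.

Section BoxSink.
Variables (n : nat) (c : 'S_n.+1) (k : nat).
Hypotheses (hc : coxeter_element c) (hk : 1 <= k <= n).
Hypothesis hsink : prefix_stable (sadj n k * c) k.
Local Notation sigma := (pfun c).
Local Open Scope group_scope.
Implicit Types (u w : vtx n).

Lemma sink_below l : 1 <= l < k -> sigma l <= k.
Proof.
move=> hl; have ol : (inord l.-1 : 'I_n.+1) = l.-1 :> nat by rewrite inordK; lia.
move/prefix_stableP: hsink => /(_ (inord l.-1)).
by rewrite permM sadj_id /pfun ?ol; try apply/eqP; lia.
Qed.

Lemma sink_col : sigma k.+1 <= k.
Proof.
move/prefix_stableP: hsink => /(_ (inord k.-1)).
by rewrite permM /pfun /= /sadj tpermL inordK; lia.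
Qed.

Lemma sink_row : k < sigma k.
Proof.
have /forallPn [o] := coxeter_not_prefix_stable hc hk.
rewrite negb_imply -leqNgt => /andP [ok kco].
have [ok1|ko] := ltnP o k.-1; first by have := sink_below (l := o.+1); rewrite pfun_ord; lia.
by rewrite /pfun (_ : inord k.-1 = o) //; apply: val_inj => /=; rewrite inordK; lia.
Qed.

Lemma sink_above r : k.+1 < r <= n.+1 -> k < sigma r.
Proof.
move=> hr; rewrite /pfun ltnS leqNgt; apply/negP => crk.
have ck : c (inord k) < k by have := sink_col; rewrite /pfun /=; lia.
have : (inord r.-1 : 'I_n.+1) = inord k.
  by apply: (coxeter_descent_uniq hc hk _ _ crk ck); rewrite inordK; lia.
by move/(congr1 val) => /=; rewrite !inordK; lia.
Qed.

Lemma box_sink_out_edge u : ARk_vert k u -> u != box_vtx n k -> exists w, ARk_edge c k u w.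
Proof.
case: u => [x y] Vu; rewrite eq_box_vtx //=; move: (Vu) => /and4P [/= x1 xk ky yn].
have rx := pfun_range c x; have ry := pfun_range c y.
have [xk'|xk'] := eqVneq (x : nat) k => /= nbox.
  have := sink_above (r := y); exists (x, inord (sigma y)).
  by rewrite /ARk_edge /ARk_vert /AR_arrow /= inordK //; lia.
have := sink_below (l := x); exists (inord (sigma x), y).
by rewrite /ARk_edge /ARk_vert /AR_arrow /= inordK //; lia.
Qed.

(* The potential of (i, j) counts the sigma-steps from i to k plus those from j to k+1. *)
Lemma box_sink_potential : exists phi : vtx n -> nat,
  forall u w, ARk_edge c k u w -> phi w < phi u.
Proof.
have reach_row := pfun_reach (y := k) hc (ltac:(lia)).
have reach_col := pfun_reach (y := k.+1) hc (ltac:(lia)).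
exists (fun u => dist reach_row u.1 + dist reach_col u.2) => u w.
case/and3P => Vu Vw; rewrite (AR_arrowE _ Vu Vw).
move: Vu Vw => /and4P [u1 u2 u3 u4] /and4P [w1 w2 w3 w4].
have col := sink_col; have row := sink_row.
case/orP => /andP [/eqP -> /eqP e].
- by rewrite e ltn_add2l dist_step //; apply/eqP => u2k; move: w3 col; rewrite e u2k; lia.
- by rewrite e ltn_add2r dist_step //; apply/eqP => u1k; move: w2 row; rewrite e u1k; lia.
Qed.

Lemma extends_through_box_sink : extends_through (ARk_vert k) (ARk_edge c k) (box_vtx n k).
Proof.
have [phi phi_decr] := box_sink_potential.
exact: (extends_through_sink (@ARk_edge_vert n k c) phi_decr box_sink_out_edge).
Qed.

End BoxSink.

(* The source case is the sink case for c^-1, whose AR^[k] graph is the converse one. *)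
Lemma extends_through_box n (c : 'S_n.+1) k : coxeter_element c -> 1 <= k <= n ->
  initial (sadj n k) c \/ final (sadj n k) c ->
  extends_through (ARk_vert k) (ARk_edge c k) (box_vtx n k).
Proof.
move=> hc hk [ini|fin]; last first.
  exact: extends_through_box_sink hc hk (final_prefix_stable hc hk fin).
apply: (extends_through_converse (E' := ARk_edge c^-1 k)) => [u v|]; first exact: ARk_edgeV.
apply: (extends_through_box_sink (coxeter_elementV hc) hk).
by rewrite -sadjV -invMg; apply/prefix_stableV/initial_prefix_stable.
Qed.

Lemma index_eq (T : eqType) (s : seq T) x y : x \in s -> (index x s == index y s) = (x == y).
Proof.
move=> xs; have [->|nxy] := eqVneq x y; first exact: eqxx.
apply/eqP => ixy; case: (boolP (y \in s)) => ys.
  by rewrite (index_inj x xs ys ixy) eqxx in nxy.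
by move: (index_mem x s); rewrite xs ixy memNindex // ltnn.
Qed.

Section BoundaryLabels.
Variable la : seq nat.

Lemma rowofK l : l \in Llabels la ->
  1 <= rowof la l <= size la /\ rowlab la (rowof la l) = l.
Proof.
move=> hl; have := index_mem l (Llabels la); rewrite hl size_map size_iota /rowof => il.
split; first lia.
by rewrite -[in RHS](nth_index 0 hl) (nth_map 0) ?size_iota // nth_iota // add1n.
Qed.

Lemma colofK r : r \in Rlabels la ->
  1 <= colof la r <= lam1 la /\ collab la (colof la r) = r.
Proof.
move=> hr; have := index_mem r (Rlabels la); rewrite hr size_map size_iota /colof => ir.
split; first lia.
by rewrite -[in RHS](nth_index 0 hr) (nth_map 0) ?size_iota // nth_iota // add1n.
Qed.

Lemma rowof_notin l : l \notin Llabels la -> rowof la l = (size la).+1.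
Proof. by move=> hl; rewrite /rowof memNindex // size_map size_iota. Qed.

Lemma colof_notin r : r \notin Rlabels la -> colof la r = (lam1 la).+1.
Proof. by move=> hr; rewrite /colof memNindex // size_map size_iota. Qed.

End BoundaryLabels.

Section Partition.
Variable la : seq nat.
Hypothesis hla : is_partition la.

Lemma part_mono i i' : 1 <= i <= i' -> i' <= size la -> part la i' <= part la i.
Proof.
move=> hi hi'; case/andP: hla => sorted_la _.
have ge_trans : transitive geq by move=> a b c ba cb; apply: leq_trans cb ba.
by rewrite /part; apply: (sorted_leq_nth ge_trans leqnn 0 sorted_la); rewrite ?inE; lia.
Qed.

Lemma part_le_lam1 i : 1 <= i <= size la -> part la i <= lam1 la.
Proof. by move=> hi; rewrite /lam1 -nth0 (part_mono (i := 1)) //; lia. Qed.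

Lemma conjp_ge j i : 1 <= i <= size la -> j <= part la i -> i <= conjp la j.
Proof.
move=> hi hj; rewrite /conjp -(cat_take_drop i la) count_cat.
have -> : count (fun x => j <= x) (take i la) = i.
  rewrite -[RHS](size_takel (n0 := i) (s := la)); last lia.
  apply/eqP; rewrite -all_count; apply/(all_nthP 0) => m.
  rewrite size_takel; last lia.
  by move=> mi; rewrite nth_take //; apply: leq_trans hj (part_mono (i := m.+1) _ _); lia.
exact: leq_addr.
Qed.

Lemma conjp_lt j i : 1 <= i <= size la -> part la i < j -> conjp la j < i.
Proof.
move=> hi hj; rewrite /conjp -(cat_take_drop i.-1 la) count_cat.
have -> : count (fun x => j <= x) (drop i.-1 la) = 0.
  apply/eqP; rewrite -leqn0 leqNgt -has_count -all_predC; apply/(all_nthP 0) => m.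
  rewrite size_drop => hm /=; rewrite nth_drop -ltnNge.
  by apply: leq_ltn_trans hj; apply: (part_mono (i := i) (i' := (i.-1 + m).+1)); lia.
rewrite addn0; apply: leq_ltn_trans (count_size _ _) _; rewrite size_take_min; lia.
Qed.

Lemma collab_rowlab_corner i j : 1 <= i <= size la -> 1 <= j <= lam1 la ->
  collab la j = (rowlab la i).+1 -> j = part la i.
Proof.
move=> hi hj; have := part_le_lam1 hi; rewrite /collab /rowlab.
case: (ltngtP j (part la i)) => [ji|ij|//] _.
- by have := conjp_ge hi (ltnW ji); lia.
- by have := conjp_lt hi ij; lia.
Qed.

End Partition.

Section Box.
Variables (la : seq nat) (k : nat).
Hypotheses (hla : is_partition la) (kL : k \in Llabels la) (kR : k.+1 \in Rlabels la).
Local Notation i0 := (rowof la k).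
Local Notation j0 := (colof la k.+1).

Lemma box_corner : [/\ 1 <= i0 <= size la, j0 = part la i0 & diag la i0 j0 = k].
Proof.
have [i0_range i0_lab] := rowofK kL; have [j0_range j0_lab] := colofK kR.
have j0E : j0 = part la i0 by apply: collab_rowlab_corner; rewrite ?i0_lab.
have := part_le_lam1 hla i0_range.
by split => //; move: i0_lab; rewrite /diag /rowlab j0E; lia.
Qed.

Lemma diag_box i j : in_Fer la i j -> diag la i j = k ->
  (i == i0) && (j == j0) || (minn i j < minn i0 j0).
Proof.
case/andP => /andP [i1 isz] /andP [j1 ji]; rewrite /diag.
have [/andP [i01 i0sz] j0E dk] := box_corner; move: dk; rewrite /diag => dk.
have := part_le_lam1 hla (i := i); have := part_le_lam1 hla (i := i0).
case: (leqP i0 i) => i0i; last by lia.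
by have := part_mono hla (i := i0) (i' := i); lia.
Qed.

Lemma delta_max_box : delta_max la k = minn i0 j0.
Proof.
have [/andP [i01 i0sz] j0E dk] := box_corner.
apply/eqP; rewrite eqn_leq; apply/andP; split.
  apply/bigmax_leqP_seq => -[i j] /allpairsPdep [i' [j' [ii' jj' [-> ->]]]] /eqP /= dij.
  have ij : in_Fer la i' j' by move: ii' jj'; rewrite !mem_iota /in_Fer; lia.
  by case/orP: (diag_box ij dij) => [/andP [/eqP -> /eqP ->] // | /ltnW].
apply: (leq_bigmax_seq (F := fun p : nat * nat => minn p.1 p.2) (i0, j0)); last by rewrite /= dk.
have [j0_range _] := colofK kR.
by apply/allpairsPdep; exists i0, j0; rewrite !mem_iota; split => //; lia.
Qed.

End Box.

Section AddToBox.
Variables (la : seq nat) (k a : nat).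

Lemma addkE g i j :
  addk la k a g i j = g i j + (if (i == rowof la k) && (j == colof la k.+1) then a else 0).
Proof. by rewrite /addk; case: ifP; rewrite ?addn0. Qed.

Lemma rep_addk f l r : rep la (addk la k a f) l r = rep la f l r +
  (if [&& l == k, r == k.+1, k \in Llabels la & k.+1 \in Rlabels la] then a else 0).
Proof.
rewrite /rep addkE; case: ifP => [/and3P [lL rR lr] | lrNbox].
  congr (_ + (if _ then _ else _)); rewrite /rowof /colof !eqSS !index_eq //.
  case: (eqVneq l k) => [elk|] //=; case: (eqVneq r k.+1) => [erk|] //=.
  by move: lL rR; rewrite elk erk => -> ->.
case: eqP => [lk|]; case: eqP => [rk|] //=; move: lrNbox; rewrite lk rk ltnSn andbT.
by case: (k \in _) => //; case: (_ \in _).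
Qed.

Lemma box_on_diag i j : is_partition la -> in_Fer la i j ->
  (i == rowof la k) && (j == colof la k.+1) ->
  [&& k \in Llabels la, k.+1 \in Rlabels la & diag la i j == k].
Proof.
move=> hla ij /andP [/eqP ei /eqP ej].
move: ij; rewrite ei ej => /andP [/andP [_ isz] /andP [_ jsz]].
case kL: (k \in Llabels la); last by move: isz; rewrite rowof_notin ?kL //; lia.
case kR: (k.+1 \in Rlabels la); last first.
  have := part_le_lam1 hla (rowofK kL).1.
  by move: jsz; rewrite colof_notin ?kR //; lia.
by have [_ _ ->] := box_corner hla kL kR; rewrite eqxx.
Qed.

Lemma RSK_addk_off n (c : 'S_n.+1) f i j :
  ~~ [&& k \in Llabels la, k.+1 \in Rlabels la & diag la i j == k] ->
  RSK la c (addk la k a f) i j = RSK la c f i j.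
Proof.
move=> off; apply: eq_GK_part => u Vu; rewrite rep_addk.
case: ifP => [/and4P [/eqP u1 /eqP u2 kL kR] | _]; last exact: addn0.
by move: off Vu; rewrite kL kR /= unfold_in /ARk_vert u1 u2; lia.
Qed.

Lemma RSK_addk_diag n (c : 'S_n.+1) f i j : coxeter_element c -> 1 <= k <= n ->
  initial (sadj n k) c \/ final (sadj n k) c ->
  is_partition la -> k \in Llabels la -> k.+1 \in Rlabels la ->
  in_Fer la i j -> diag la i j = k ->
  RSK la c (addk la k a f) i j =
  RSK la c f i j + (if (i == rowof la k) && (j == colof la k.+1) then a else 0).
Proof.
move=> hc hk hck hla kL kR ij dk; rewrite /RSK /= dk.
rewrite (eq_GK_part _ (g2 := add_at (box_vtx n k) a (fun u : vtx n => rep la f u.1 u.2))).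
  rewrite (GK_part_add_at _ (box_vtx_vert hk) (extends_through_box hc hk hck)) ?addn1 //.
  congr (_ + (if _ then _ else _)); rewrite eqSS subn_eq0 delta_max_box //.
  case/orP: (diag_box hla kL kR ij dk) => [/andP [/eqP -> /eqP ->] | lt].
    by rewrite !eqxx leqnn.
  rewrite leqNgt lt; apply/esym/negP => /andP [/eqP ei /eqP ej].
  by rewrite ei ej ltnn in lt.
by move=> u _; rewrite rep_addk /add_at kL kR eq_box_vtx // !andbT.
Qed.

End AddToBox.

Theorem theorem6p15 (n : nat) (la : seq nat) (c : 'S_n.+1) (k : nat) :
  1 <= n -> is_partition la -> lam1 la + size la = n.+1 ->
  coxeter_element c -> 1 <= k <= n ->
  final (sadj n k) (clam n la) ->
  initial (sadj n k) c \/ final (sadj n k) c ->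
  forall (a : nat) (f : nat -> nat -> nat) (i j : nat), in_Fer la i j ->
    RSK la c (addk la k a f) i j = addk la k a (RSK la c f) i j.
Proof.
move=> _ hla _ hc hk _ hck a f i j ij; rewrite addkE.
have [/and3P [kL kR /eqP dk] | off] :=
  boolP [&& k \in Llabels la, k.+1 \in Rlabels la & diag la i j == k].
  exact: RSK_addk_diag.
by rewrite RSK_addk_off // ifN ?addn0 //; apply: contra off; apply: box_on_diag.
Qed.
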